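(* If a graph $G$ is $P_5$-free and has an efficient dominating set, then its square $G^2$ is $P_4$-free.
   Context: All graphs are finite, undirected and simple. A vertex dominates itself and all its neighbors. A vertex set $D$ of $G$ is an efficient dominating set if every vertex of $G$ is dominated by exactly one vertex of $D$. The square of $G=(V,E)$ is the graph $G^2=(V,E^2)$ in which $uv\in E^2$ if and only if the distance between $u$ and $v$ in $G$ is $1$ or $2$. $P_k$ denotes the chordless path on $k$ vertices; $F$-free means having no induced subgraph isomorphic to $F$. *)

From mathcomp Require Import all_boot.
Set Implicit Arguments. Unset Strict Implicit. Unset Printing Implicit Defensive.

Definition simple_graph (T : finType) (e : rel T) : Prop :=
  symmetric e /\ irreflexive e.

Definition dominates (T : finType) (e : rel T) (d v : T) : bool :=
  (d == v) || e d v.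

Definition efficient_dom (T : finType) (e : rel T) (D : {set T}) : Prop :=
  forall v : T, #|[set d in D | dominates e d v]| = 1.

Definition has_efficient_dom (T : finType) (e : rel T) : Prop :=
  exists D : {set T}, efficient_dom e D.

Definition sq_rel (T : finType) (e : rel T) : rel T :=
  fun x y => (x != y) && (e x y || [exists z, e x z && e z y]).

Definition induced_path (T : finType) (e : rel T) (k : nat) (f : 'I_k -> T) : Prop :=
  injective f /\
  forall i j : 'I_k, e (f i) (f j) = ((i.+1 == j :> nat) || (j.+1 == i :> nat)).

Definition Pk_free (T : finType) (e : rel T) (k : nat) : Prop :=
  forall f : 'I_k -> T, ~ induced_path e f.

From mathcomp Require Import all_boot zify.

(* Let [dominator v] be the unique vertex of the efficient dominating set [D]
   dominating [v].  In a P5-free graph, if p-q-r-s is a path whose ends are at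
   distance at least 3, then [p] and [q] share their dominator while [q] and [r]
   do not: otherwise a dominator extends the path, or a detour p-v-r-s-u through
   the dominators [v] of [r] and [u] of [q], to an induced P5.  Joining the
   consecutive vertices of an induced P4 a-b-c-d of the square by paths of
   length at most 2 then gives either an induced P5 of the graph or two such
   paths imposing contradictory (in)equalities between dominators. *)

Set Implicit Arguments. Unset Strict Implicit. Unset Printing Implicit Defensive.

Definition path_adj (i j : nat) := (i.+1 == j) || (j.+1 == i).

Lemma path5_adj_rows_inj (i j : 'I_5) :
  (forall k : 'I_5, path_adj i k = path_adj j k) -> i = j.
Proof.
move=> h; apply/val_inj.
move: (h ord0) (h (inord 1)) (h (inord 2)) (h (inord 3)) (h (inord 4)).
by case: i j {h} => [[|[|[|[|[|?]]]]] ?] [[|[|[|[|[|?]]]]] ?] //;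
  rewrite /path_adj ?inordK.
Qed.

Section P5FreeGraph.

Variables (T : finType) (e : rel T).
Hypothesis esym : symmetric e.

Lemma edge_sym x y : e x y -> e y x.
Proof. by rewrite esym. Qed.

Lemma dominates_adj w v : e w v -> dominates e w v.
Proof. by move=> wv; rewrite /dominates wv orbT. Qed.

Lemma dominates_sym w v : dominates e w v = dominates e v w.
Proof. by rewrite /dominates eq_sym esym. Qed.

Definition dist_le2 (p q : T) : bool :=
  [exists w, dominates e w p && dominates e w q].

Lemma dist_le2_sym p q : dist_le2 p q = dist_le2 q p.
Proof. by apply/existsP/existsP => -[w]; rewrite andbC; exists w. Qed.

Lemma far_nadj p q w : ~~ dist_le2 p q -> dominates e w p -> ~~ e w q.
Proof.
move=> far wp; apply/negP => wq; case/existsP: far.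
by exists w; rewrite wp dominates_adj.
Qed.

Lemma far_nadj_sym p q w : ~~ dist_le2 q p -> dominates e w p -> ~~ e w q.
Proof. by rewrite dist_le2_sym; apply: far_nadj. Qed.

Lemma dist_le2_path p x q : e p x -> e x q -> dist_le2 p q.
Proof.
by move=> px xq; apply/existsP; exists x; rewrite dominates_sym !dominates_adj.
Qed.

Lemma dist_le2_sq_rel p q : dist_le2 p q = (p == q) || sq_rel e p q.
Proof.
rewrite /sq_rel; case: (eqVneq p q) => [->|pq] /=.
  by apply/existsP; exists q; rewrite /dominates eqxx.
apply/existsP/orP => [[w /andP[]]|[pq'|/existsP[w /andP[pw wq]]]].
- rewrite /dominates => /orP[/eqP wp|wp] /orP[/eqP wq|wq].
  + by rewrite -wp -wq eqxx in pq.
  + by left; rewrite -wp.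
  + by left; rewrite -wq esym.
  + by right; apply/existsP; exists w; rewrite esym wp.
- by exists p; rewrite /dominates eqxx pq' orbT.
- by exists w; rewrite dominates_sym !dominates_adj.
Qed.

Lemma sq_rel_sym p q : sq_rel e p q = sq_rel e q p.
Proof.
rewrite /sq_rel eq_sym (esym p q); congr (_ && (_ || _)).
by apply/existsP/existsP => -[x /andP[px xq]]; exists x;
  rewrite esym xq esym px.
Qed.

Lemma sq_rel_mid p q : sq_rel e p q -> ~~ e p q -> exists2 x, e p x & e x q.
Proof. by case/andP=> _ /orP[->|/existsP[x /andP[]]] //; exists x. Qed.

Hypotheses (irr : irreflexive e) (P5free : Pk_free e 5).

Lemma P5_free_path v0 v1 v2 v3 v4 :
  e v0 v1 -> e v1 v2 -> e v2 v3 -> e v3 v4 ->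
  ~~ e v0 v2 -> ~~ e v0 v3 -> ~~ e v0 v4 -> ~~ e v1 v3 -> ~~ e v1 v4 ->
  ~~ e v2 v4 -> False.
Proof.
move=> e01 e12 e23 e34 /negbTE n02 /negbTE n03 /negbTE n04 /negbTE n13
  /negbTE n14 /negbTE n24.
pose f (i : 'I_5) := nth v0 [:: v0; v1; v2; v3; v4] i.
have f_adj i j : e (f i) (f j) = path_adj i j.
  wlog le_ij : i j / i <= j => [sym|].
    by case: (leqP i j) => [/sym //|/ltnW /sym]; rewrite esym /path_adj orbC.
  by case: i j le_ij => [[|[|[|[|[|?]]]]] ?] [[|[|[|[|[|?]]]]] ?] //=;
    rewrite ?irr.
apply: (P5free (f := f)); split => // i j fij.
by apply: path5_adj_rows_inj => k; rewrite -!f_adj fij.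
Qed.

Variables (D : {set T}) (effD : efficient_dom e D).

Definition dominator (v : T) : T := odflt v [pick d in D | dominates e d v].

Lemma dominatorP v : (dominator v \in D) && dominates e (dominator v) v.
Proof.
have /card_gt0P[w] : 0 < #|[set d in D | dominates e d v]| by rewrite effD.
by rewrite inE /dominator => wv; case: pickP => [//|/(_ w)]; rewrite wv.
Qed.

Lemma dominator_in v : dominator v \in D.
Proof. by case/andP: (dominatorP v). Qed.

Lemma dominates_dominator v : dominates e (dominator v) v.
Proof. by case/andP: (dominatorP v). Qed.

Lemma dominator_unique w v : w \in D -> dominates e w v -> dominator v = w.
Proof.
move=> wD wv; have /cards1P[z Ez] : #|[set d in D | dominates e d v]| == 1.
  by rewrite effD.
have dom_z x : (x \in D) && dominates e x v -> x = z.
  by move=> xv; apply/set1P; rewrite -Ez inE.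
by rewrite (dom_z _ (dominatorP v)) (dom_z w) // wD.
Qed.

Lemma dominator_nadj u v : dominator v != dominator u -> ~~ e (dominator u) v.
Proof.
apply: contra => uv; apply/eqP.
exact: dominator_unique (dominator_in u) (dominates_adj uv).
Qed.

Lemma dominators_nadj u v :
  dominator u != dominator v -> ~~ e (dominator u) (dominator v).
Proof.
move=> uv; apply: dominator_nadj.
by rewrite (dominator_unique (dominator_in v)) 1?eq_sym // /dominates eqxx.
Qed.

(* If [v] were in [D] it would dominate [x]. *)
Lemma dominator_adj v x : e v x -> dominator x != dominator v ->
  e (dominator v) v.
Proof.
move=> vx xv; case/orP: (dominates_dominator v) => [/eqP vD|//].
suff xD : dominator x = dominator v by rewrite xD eqxx in xv.
by apply: dominator_unique (dominator_in v) _; rewrite vD dominates_adj.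
Qed.

Lemma far_dominator_neq p q : ~~ dist_le2 p q -> dominator p != dominator q.
Proof.
apply: contra => /eqP pq; apply/existsP; exists (dominator p).
by rewrite {2}pq !dominates_dominator.
Qed.

Ltac dominated :=
  apply/orP; first [left; exact: eqxx | right; assumption
                   | right; rewrite esym; assumption].

(* Discharges [~~ e x y] from a hypothesis or from [~~ dist_le2 p q] with
   [x] or [y] in the closed neighbourhood of [p]. *)
Ltac nonadj :=
  match goal with |- is_true (~~ e ?x ?y) =>
    first [ assumption | rewrite esym; assumption
          | match goal with F : is_true (~~ dist_le2 _ _) |- _ =>
              first [ apply: (far_nadj F); dominated
                    | apply: (far_nadj_sym F); dominated
                    | rewrite esym; apply: (far_nadj F); dominated
                    | rewrite esym; apply: (far_nadj_sym F); dominated ]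
            end ]
  end.

Lemma dominator_far_path_end p q r s :
  e p q -> e q r -> e r s -> ~~ dist_le2 p s ->
  dominator p = dominator q \/ dominator p = dominator r.
Proof.
move=> pq qr rs ps.
case: (eqVneq (dominator p) (dominator q)) => [|qp]; first by left.
case: (eqVneq (dominator p) (dominator r)) => [|rp]; first by right.
have wp : e (dominator p) p by apply: (dominator_adj pq); rewrite eq_sym.
have nwq : ~~ e (dominator p) q by apply: dominator_nadj; rewrite eq_sym.
have nwr : ~~ e (dominator p) r by apply: dominator_nadj; rewrite eq_sym.
exfalso; apply: (P5_free_path wp pq qr rs); nonadj.
Qed.

Lemma dominator_far_path p q r s :
  e p q -> e q r -> e r s -> ~~ dist_le2 p s -> dominator p = dominator q.
Proof.
move=> pq qr rs ps; have sp : ~~ dist_le2 s p by rewrite dist_le2_sym.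
have [//|pr] := dominator_far_path_end pq qr rs ps.
have := far_dominator_neq ps; rewrite pr.
have [-> /eqP //|sq rq] :=
  dominator_far_path_end (edge_sym rs) (edge_sym qr) (edge_sym pq) sp.
rewrite sq in rq.
have vp : e (dominator r) p.
  by rewrite -pr; apply: (dominator_adj pq); rewrite pr eq_sym.
have vr : e (dominator r) r.
  by apply: (dominator_adj (edge_sym qr)); rewrite eq_sym.
have us : e (dominator q) s.
  by rewrite -sq; apply: (dominator_adj (edge_sym rs)); rewrite sq.
have nvu : ~~ e (dominator r) (dominator q) by apply: dominators_nadj.
have nur : ~~ e (dominator q) r by apply: dominator_nadj.
exfalso; apply: (P5_free_path (edge_sym vp) vr rs (edge_sym us)); nonadj.
Qed.

Lemma dominator_far_path_mid p q r s :
  e p q -> e q r -> e r s -> ~~ dist_le2 p s -> dominator q != dominator r.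
Proof.
move=> pq qr rs ps; have sp : ~~ dist_le2 s p by rewrite dist_le2_sym.
rewrite -(dominator_far_path pq qr rs ps).
rewrite -(dominator_far_path (edge_sym rs) (edge_sym qr) (edge_sym pq) sp).
exact: far_dominator_neq.
Qed.

Section SquareP4.

Variables a b c d : T.
Hypotheses (ac : ~~ dist_le2 a c) (bd : ~~ dist_le2 b d) (ad : ~~ dist_le2 a d).

Lemma square_P4_mid_edge :
  sq_rel e a b -> e b c -> sq_rel e c d -> False.
Proof.
move=> ab bc cd.
have [ab'|nab] := boolP (e a b).
  by move: ac; rewrite (dist_le2_path ab' bc).
have [cd'|ncd] := boolP (e c d).
  by move: bd; rewrite (dist_le2_path bc cd').
have [x ax xb] := sq_rel_mid ab nab; have [z cz zd] := sq_rel_mid cd ncd.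
have [xz|nxz] := boolP (e x z).
  have := dominator_far_path_mid ax xb bc ac.
  by rewrite (dominator_far_path (edge_sym xb) xz zd bd) eqxx.
by apply: (P5_free_path ax xb bc cz); nonadj.
Qed.

Lemma square_P4_end_edge w :
  e a b -> e b w -> e w c -> ~~ e b c -> sq_rel e c d -> False.
Proof.
move=> ab bw wc nbc cd; have := dominator_far_path_mid ab bw wc ac.
have [cd'|ncd] := boolP (e c d).
  by rewrite (dominator_far_path bw wc cd' bd) eqxx.
have [z cz zd] := sq_rel_mid cd ncd.
have [wz|nwz] := boolP (e w z).
  by rewrite (dominator_far_path bw wz zd bd) eqxx.
by move=> _; apply: (P5_free_path ab bw wc cz); nonadj.
Qed.

Lemma square_P4_no_edge x w z :
  e a x -> e x b -> e b w -> e w c -> e c z -> e z d ->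
  ~~ e a b -> ~~ e b c -> ~~ e c d -> False.
Proof.
move=> ax xb bw wc cz zd nab nbc ncd.
have [xw|nxw] := boolP (e x w);
  last by apply: (P5_free_path ax xb bw wc); nonadj.
have [wz|nwz] := boolP (e w z);
  last by apply: (P5_free_path bw wc cz zd); nonadj.
have [xz|nxz] := boolP (e x z);
  last by apply: (P5_free_path ax xw wz zd); nonadj.
have := dominator_far_path_mid ax xw wc ac.
rewrite -(dominator_far_path (edge_sym xb) xz zd bd).
by rewrite (dominator_far_path bw wz zd bd) eqxx.
Qed.

End SquareP4.

Lemma no_square_P4 a b c d :
  sq_rel e a b -> sq_rel e b c -> sq_rel e c d ->
  ~~ dist_le2 a c -> ~~ dist_le2 b d -> ~~ dist_le2 a d -> False.
Proof.
move=> ab bc cd ac bd ad.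
have [bc'|nbc] := boolP (e b c); first exact: square_P4_mid_edge ab bc' cd.
have [w bw wc] := sq_rel_mid bc nbc.
have [ab'|nab] := boolP (e a b).
  exact: (square_P4_end_edge ac bd ad ab' bw wc nbc cd).
have [x ax xb] := sq_rel_mid ab nab.
have [cd'|ncd] := boolP (e c d).
  rewrite dist_le2_sym in ac; rewrite dist_le2_sym in bd.
  rewrite dist_le2_sym in ad; rewrite sq_rel_sym in ab; rewrite esym in nbc.
  exact: (square_P4_end_edge bd ac ad
           (edge_sym cd') (edge_sym wc) (edge_sym bw) nbc ab).
have [z cz zd] := sq_rel_mid cd ncd.
exact: (square_P4_no_edge ac bd ad ax xb bw wc cz zd nab nbc ncd).
Qed.

End P5FreeGraph.

Theorem theorem3 (T : finType) (e : rel T) :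
  simple_graph e -> Pk_free e 5 -> has_efficient_dom e -> Pk_free (sq_rel e) 4.
Proof.
move=> [esym irr] P5free [D effD] f [f_inj f_adj].
have far (i j : 'I_4) : i.+1 < j -> ~~ dist_le2 e (f i) (f j).
  move=> lt_ij; rewrite dist_le2_sq_rel // (inj_eq f_inj) f_adj -val_eqE /=.
  by lia.
by apply: (no_square_P4 esym irr P5free effD (a := f ord0) (b := f (inord 1))
         (c := f (inord 2)) (d := f (inord 3))); rewrite ?f_adj ?far ?inordK.
Qed.
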